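(* (1) Every generic length vector of length $n$ is equivalent to a generic length vector $(\ell_1,\ldots,\ell_n)$ whose entries are positive integers with $\ell_1\le\cdots\le\ell_n$ and $$\ell_n+\ell_{n-1}\le\ell_1+\cdots+\ell_{n-2}+1.$$ (2) If $\ell=(\ell_1,\ldots,\ell_n)$ is such a vector (generic, positive integer entries, nondecreasing, satisfying the displayed inequality), let $|\ell|=\ell_1+\cdots+\ell_n$ and define the length-$(n+1)$ vector $$\ell'=\Big(\ell_1,\ldots,\ell_{n-1},\tfrac{|\ell|+1}{2}-\ell_n,\tfrac{|\ell|+1}{2}\Big).$$ Then $\ell$ and $\ell'$ have the same gees.
   Context: A length vector is $\ell=(\ell_1,\ldots,\ell_n)$ of positive reals with $\ell_1\le\cdots\le\ell_n$ and $\ell_n<\ell_1+\cdots+\ell_{n-1}$; it is generic if no $S\subset\{1,\ldots,n\}$ has $\sum_{i\in S}\ell_i=\sum_{i\notin S}\ell_i$. $S$ is short if $\sum_{i\in S}\ell_i<\sum_{i\notin S}\ell_i$. Partially order subsets by $\{s_1,\ldots,s_p\}\le T$ if $T$ contains distinct elements $t_1,\ldots,t_p$ with $s_i\le t_i$. The genetic code of $\ell$ is the set of maximal elements (genes) among short subsets containing $n$; the gees are the genes with $n$ removed. Two length vectors are equivalent if they have the same genetic code (equivalently, homeomorphic polygon spaces $\overline{M}(\ell)=\{(z_i)\in(S^1)^n:\sum\ell_iz_i=0\}/O(2)$). *)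

From HB Require Import structures.
From mathcomp Require Import all_boot all_order all_algebra.
From mathcomp Require Import reals.
Set Implicit Arguments. Unset Strict Implicit. Unset Printing Implicit Defensive.
Import Order.TTheory GRing.Theory Num.Theory.
Local Open Scope ring_scope.

Section LengthVectors.
Variable R : realType.
Variable n : nat.
(* A vector of length n is l : 'I_n -> R ; index i : 'I_n corresponds to the
   paper's index i+1, so the paper's index n is the ordinal with value n.-1. *)
Implicit Types (l : 'I_n -> R) (S T : {set 'I_n}).

Definition sumS l S : R := \sum_(i in S) l i.

Definition is_top (i : 'I_n) : bool := val i == n.-1.

Definition is_length_vector l : Prop :=
  (forall i, 0 < l i) /\
  (forall i j : 'I_n, (i <= j)%N -> l i <= l j) /\
  (forall i : 'I_n, is_top i -> l i < \sum_(j | j != i) l j).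

Definition generic l : Prop := forall S, sumS l S != sumS l (~: S).

Definition short l S : Prop := sumS l S < sumS l (~: S).

Definition subset_le S T : Prop :=
  exists f : 'I_n -> 'I_n,
    {in S &, injective f} /\ (forall s, s \in S -> (s <= f s)%N /\ f s \in T).

Definition contains_top S : Prop := exists2 i, i \in S & is_top i.

Definition gene l S : Prop :=
  [/\ short l S, contains_top S &
      forall T, short l T -> contains_top T -> subset_le S T -> T = S].

Definition equivalent (l1 l2 : 'I_n -> R) : Prop :=
  forall S, gene l1 S <-> gene l2 S.

(* gees: genes with n removed, viewed as sets of (0-based) natural indices,
   so that gees of vectors of different lengths can be compared *)
Definition gee l (A : pred nat) : Prop :=
  exists2 G, gene l G &
    forall k : nat, A k = [exists i in G, (val i == k) && ~~ is_top i].

Definition integer_entries l : Prop := exists m : 'I_n -> nat, forall i, l i = (m i)%:R.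

Definition top_ineq l : Prop :=
  \sum_(i : 'I_n | (n.-2 <= i)%N) l i <= \sum_(i : 'I_n | (i < n.-2)%N) l i + 1.

(* l' = (l_1,...,l_{n-1}, (|l|+1)/2 - l_n, (|l|+1)/2), a vector of length n+1 *)
Definition ext_vec l (i : 'I_n.+1) : R :=
  let h := (\sum_j l j + 1) / 2 in
  let ln := match @insub nat (fun k => (k < n)%N) _ n.-1 with
            | Some j => l j | None => 0 end in
  if val i == n then h
  else if val i == n.-1 then h - ln
  else match @insub nat (fun k => (k < n)%N) _ (val i) with
       | Some j => l j | None => 0 end.

End LengthVectors.

From HB Require Import structures.
From mathcomp Require Import all_boot all_order all_algebra.
From mathcomp Require Import reals.
From mathcomp Require Import zify lra.
Set Implicit Arguments. Unset Strict Implicit. Unset Printing Implicit Defensive.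
Import Order.TTheory GRing.Theory Num.Theory.
Local Open Scope ring_scope.

(* Genericity leaves a positive gap between the weights of short and
   long sets. Scaling by a large K and rounding up therefore turns l into
   integers p_i such that a set S containing the top index is short iff the sum
   of p_i over S minus the top is at most a, the largest such sum over short
   sets. Capping the p_i at a + 1 keeps this, and giving the top index the
   weight (sum of the other capped entries) - 2a - 1 realises exactly the
   threshold a with an odd total weight, so the new vector is generic; the cap
   yields l_n + l_(n-1) <= l_1 + ... + l_(n-2) + 1.

   Away from the inserted entry, l' is l with its top entry raised by
   d = (|l| + 1)/2 - l_n, and the inserted entry is d itself. Adding d to both
   sides of the shortness inequality matches the short sets containing the top
   index, and a set containing both the top and the inserted index is never
   short: twice its weight is at least |l| + 1 + 2d, more than the total
   |l| + 2d. So the genes of l and l' correspond, and with them the gees; only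
   the length-vector axioms of l are needed for this. *)

Section ShortSets.
Variables (R : realType) (n : nat).
Implicit Types (l : 'I_n -> R) (S T : {set 'I_n}).

Lemma sumS_setC l S : sumS l S + sumS l (~: S) = \sum_i l i.
Proof.
rewrite /sumS [RHS](bigID (mem S)) /=; congr (_ + _).
by apply: eq_bigl => i; rewrite inE.
Qed.

Lemma shortE l S : short l S <-> 2 * sumS l S < \sum_i l i.
Proof. by rewrite /short -(sumS_setC l S); split => ?; lra. Qed.

Lemma equivalent_of_short l1 l2 :
  (forall S, contains_top S -> (short l1 S <-> short l2 S)) -> equivalent l1 l2.
Proof.
move=> eq_short S.
suff gene_sub l l' : (forall S, contains_top S -> (short l S <-> short l' S)) ->
    gene l S -> gene l' S.
  by split; apply: gene_sub => // T /eq_short; case.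
move=> sh [shS topS maxS]; split => [||T shT topT leST]; first by apply/sh.
- by [].
- by apply: maxS => //; apply/sh.
Qed.

End ShortSets.

Lemma is_top_ord_max (k : nat) (i : 'I_k.+1) : is_top i = (i == ord_max).
Proof. by rewrite /is_top -val_eqE. Qed.

Lemma contains_topE (k : nat) (S : {set 'I_k.+1}) : contains_top S <-> ord_max \in S.
Proof.
split => [[i iS]|]; last by exists ord_max; rewrite // is_top_ord_max.
by rewrite is_top_ord_max => /eqP <-.
Qed.

Lemma length_vector_size (R : realType) (n : nat) (l : 'I_n -> R) :
  is_length_vector l -> generic l -> (1 < n)%N.
Proof.
case: n l => [|[|//]] l [l_gt0 [_ l_top]] l_gen.
- by have := l_gen set0; rewrite /sumS !big1 ?eqxx // => -[].
- have := l_top ord0 isT; rewrite big1 => [|j]; last by rewrite ord1 eqxx.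
  by rewrite ltNge (ltW (l_gt0 ord0)).
Qed.

Section Gap.
Variables (R : realType) (n : nat) (l : 'I_n -> R).
Hypothesis l_generic : generic l.

Definition genericity_gap : R :=
  \big[Order.min/1]_(S : {set 'I_n}) `|\sum_i l i - 2 * sumS l S|.

Lemma genericity_gap_gt0 : 0 < genericity_gap.
Proof.
apply: lt_bigmin => // S _; rewrite normr_gt0 -(sumS_setC l S).
by apply: contraNneq (l_generic S) => eq0; apply/eqP; lra.
Qed.

Lemma genericity_gap_le S : genericity_gap <= `|\sum_i l i - 2 * sumS l S|.
Proof. exact: bigmin_le. Qed.

Lemma short_gap S : short l S -> 2 * sumS l S + genericity_gap <= \sum_i l i.
Proof.
move=> /shortE sh; have := genericity_gap_le S; rewrite ger0_norm; lra.
Qed.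

Lemma not_short_gap S : ~ short l S -> \sum_i l i + genericity_gap <= 2 * sumS l S.
Proof.
move=> /negP; rewrite -leNgt le_eqVlt eq_sym (negbTE (l_generic S)) /= => lt.
have := genericity_gap_le S; rewrite -(sumS_setC l S) ler0_norm; lra.
Qed.

Lemma short_not_short_gap S T :
  short l S -> ~ short l T -> sumS l S + genericity_gap <= sumS l T.
Proof. by move=> /short_gap ? /not_short_gap ?; lra. Qed.

End Gap.

Section Rescale.
Variables (R : realType) (n : nat) (l : 'I_n -> R) (K : nat).
Hypothesis l_ge0 : forall i, 0 <= l i.

Definition rescale i : nat := (Num.truncn (K%:R * l i)).+1.

Lemma rescale_bounds i : K%:R * l i < (rescale i)%:R <= K%:R * l i + 1.
Proof.
have /truncn_itv /andP [lo hi] : 0 <= K%:R * l i by rewrite mulr_ge0.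
by rewrite hi /rescale -addn1 natrD lerD2r.
Qed.

Lemma rescale_sum_bounds A :
  K%:R * sumS l A <= (\sum_(i in A) rescale i)%:R <= K%:R * sumS l A + n%:R.
Proof.
rewrite natr_sum /sumS mulr_sumr; apply/andP; split.
  by apply: ler_sum => i _; have /andP [/ltW] := rescale_bounds i.
apply: le_trans (_ : \sum_(i in A) (K%:R * l i + 1) <= _).
  by apply: ler_sum => i _; have /andP [_] := rescale_bounds i.
by rewrite big_split /= lerD2l sumr_const ler_nat -[leqRHS]card_ord max_card.
Qed.

Lemma rescale_mono i j : l i <= l j -> (rescale i <= rescale j)%N.
Proof. by move=> le_ij; rewrite ltnS le_truncn // ler_wpM2l. Qed.

Lemma rescale_mul_lt (c : nat) (d : R) A B :
  (c * n)%:R < K%:R * d -> c%:R * sumS l A + d <= sumS l B ->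
  (c * \sum_(i in A) rescale i < \sum_(i in B) rescale i)%N.
Proof.
move=> Kd le_AB; rewrite -(ltr_nat R) natrM.
have /andP [_ hiA] := rescale_sum_bounds A; have /andP [loB _] := rescale_sum_bounds B.
have {}hiA := ler_wpM2l (ler0n R c) hiA.
have {}le_AB := ler_wpM2l (ler0n R K) le_AB.
rewrite natrM in Kd; lra.
Qed.

End Rescale.

Lemma sum_minn_leq (I : finType) (A : {pred I}) (F : I -> nat) k :
  (\sum_(i in A) minn (F i) k.+1 <= k)%N = (\sum_(i in A) F i <= k)%N.
Proof.
apply/idP/idP => [le_k|]; last first.
  by apply: leq_trans; apply: leq_sum => i _; apply: geq_minl.
suff eq_min : {in A, forall i, minn (F i) k.+1 = F i} by rewrite -(eq_bigr _ eq_min).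
by move=> i iA; apply/minn_idPl; move: le_k; rewrite (bigD1 i iA) /=; lia.
Qed.

Section TwoLargest.
Variables (R : realType) (m : nat).
Implicit Types (i j : 'I_m.+2) (A S : {set 'I_m.+2}).

Let t : 'I_m.+2 := ord_max.
Let s : 'I_m.+2 := inord m.
Let low : {set 'I_m.+2} := [set j : 'I_m.+2 | (j < m)%N].

Lemma val_s : val s = m. Proof. exact: inordK. Qed.

Lemma leq_s j : j != t -> (j <= s)%N.
Proof. by rewrite val_s -val_eqE; case: j => k /= k_lt; lia. Qed.

Lemma s_neq_t : s != t.
Proof. by rewrite -val_eqE val_s /= ltn_eqF. Qed.

Lemma mem_low i : (i \in low) = (i != t) && (i != s).
Proof. by rewrite inE -!val_eqE val_s /=; case: i => k /= k_lt; lia. Qed.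

Lemma big_two_largest (T : Type) (idx : T) (op : Monoid.com_law idx) (F : 'I_m.+2 -> T) :
  \big[op/idx]_i F i = op (F t) (op (F s) (\big[op/idx]_(i in low) F i)).
Proof.
rewrite (bigD1 t) // (bigD1 s) /= ?s_neq_t //; congr (op _ (op _ _)).
by apply: eq_bigl => j; rewrite mem_low andbC.
Qed.

Section Threshold.
Variables (a : nat) (c : 'I_m.+2 -> nat).
Hypothesis c_gt0 : forall i, (0 < c i)%N.
Hypothesis c_mono : forall i j, (i <= j)%N -> (c i <= c j)%N.
Hypothesis c_s_le : (c s <= a.+1)%N.
Hypothesis c_low_gt : (2 * a < \sum_(i in low) c i)%N.

Let Q := (c s + \sum_(i in low) c i)%N.

(* The top weight makes S (containing t) short iff its other entries sum to at
   most a, and makes the total weight 2 Q - 2 a - 1 odd. *)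
Definition threshold_nat i : nat := if i == t then (Q - (2 * a).+1)%N else c i.
Local Notation q := threshold_nat.

Definition threshold_vec i : R := (q i)%:R.

Lemma threshold_nat_neq_t i : i != t -> q i = c i.
Proof. by rewrite /q => /negbTE ->. Qed.

Lemma threshold_nat_top : (q t + (2 * a).+1 = Q)%N.
Proof. by rewrite /q eqxx /Q; lia. Qed.

Lemma sum_threshold_nat_notin_t A :
  t \notin A -> (\sum_(i in A) q i = \sum_(i in A) c i)%N.
Proof.
move=> tA; apply: eq_bigr => i iA; rewrite threshold_nat_neq_t //.
by apply: contraNneq tA => <-.
Qed.

Lemma t_notin_low : t \notin low.
Proof. by rewrite inE /= ltnNge leqW. Qed.

Lemma sum_threshold_nat : (\sum_i q i = q t + Q)%N.
Proof.
rewrite (big_two_largest addn) /= (threshold_nat_neq_t s_neq_t).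
by rewrite (sum_threshold_nat_notin_t t_notin_low).
Qed.

Lemma sum_threshold_nat_neq_t : (\sum_(i | i != t) q i = Q)%N.
Proof.
by apply/eqP; rewrite -(eqn_add2l (q t)) -sum_threshold_nat [X in _ == X](bigD1 t).
Qed.

Lemma sumS_threshold_vec S : sumS threshold_vec S = (\sum_(i in S) q i)%:R.
Proof. by rewrite natr_sum. Qed.

Lemma threshold_vec_length : is_length_vector threshold_vec.
Proof.
have := threshold_nat_top; rewrite /Q => top_eq.
have c_s_gt0 := c_gt0 s.
split; [move=> i | split; [move=> i j le_ij | move=> i]].
- rewrite ltr0n; have [-> | /threshold_nat_neq_t ->] := eqVneq i t; [lia | exact: c_gt0].
- rewrite ler_nat; have [-> | j_ne] := eqVneq j t.
    have [-> // | i_ne] := eqVneq i t.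
    by rewrite threshold_nat_neq_t //; apply: leq_trans (c_mono (leq_s i_ne)) _; lia.
  have i_ne : i != t.
    apply: contraNneq j_ne => i_t; rewrite -val_eqE /= eqn_leq -ltnS ltn_ord.
    by rewrite -[X in (X <= _)%N]/(val t) -i_t.
  by rewrite !threshold_nat_neq_t //; apply: c_mono.
- rewrite is_top_ord_max => /eqP ->.
  by rewrite -natr_sum sum_threshold_nat_neq_t ltr_nat -/t /Q; lia.
Qed.

Lemma threshold_vec_generic : generic threshold_vec.
Proof.
move=> S; rewrite !sumS_threshold_vec eqr_nat; apply/eqP => eq_sum.
have := sumS_setC threshold_vec S.
rewrite !sumS_threshold_vec -natrD -natr_sum => /eqP.
by rewrite eqr_nat sum_threshold_nat -threshold_nat_top eq_sum; lia.
Qed.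

Lemma threshold_vec_top_ineq : top_ineq threshold_vec.
Proof.
rewrite /top_ineq /=.
have -> : \sum_(i : 'I_m.+2 | (i < m)%N) threshold_vec i =
    \sum_(i in low) threshold_vec i.
  by apply: eq_bigl => i; rewrite inE.
have : \sum_i threshold_vec i =
    \sum_(i in low) threshold_vec i + \sum_(i : 'I_m.+2 | (m <= i)%N) threshold_vec i.
  rewrite (bigID (mem low)) /=; congr (_ + _).
  by apply: eq_bigl => i; rewrite inE -leqNgt.
rewrite (big_two_largest +%R) /=.
suff : threshold_vec t + threshold_vec s <= \sum_(i in low) threshold_vec i + 1 by lra.
rewrite /threshold_vec -natr_sum -natrD natr1 ler_nat (threshold_nat_neq_t s_neq_t).
rewrite (sum_threshold_nat_notin_t t_notin_low).
by have := threshold_nat_top; rewrite /Q; lia.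
Qed.

Lemma short_threshold_vec S :
  t \in S -> short threshold_vec S <-> (\sum_(i in S :\ t) c i <= a)%N.
Proof.
move=> tS; rewrite shortE sumS_threshold_vec -natr_sum sum_threshold_nat.
rewrite (big_setD1 t) //= sum_threshold_nat_notin_t ?setD11 //.
rewrite -natrM ltr_nat -threshold_nat_top.
(* The two occurrences of this sum are elaborated differently, which lia does
   not see through. *)
by move: (\sum_(i in S :\ t) c i) => x; lia.
Qed.

End Threshold.

Section IntegerRepresentative.
Variable l : 'I_m.+2 -> R.
Hypotheses (l_length : is_length_vector l) (l_generic : generic l).

Let gap := genericity_gap l.
(* K * gap exceeds twice the largest rounding error n of a sum of the p_i, as
   needed in [short_iff_pn_le_a] and [low_c_gt]. *)
Let K := Num.Def.archi_bound ((2 * m.+2)%:R / gap).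
Let p := rescale l K.
Let pn A := (\sum_(i in A) p i)%N.
Let short_top S := (t \in S) && (sumS l S < sumS l (~: S)).
Let a := (\max_(S | short_top S) pn (S :\ t))%N.

Lemma l_ge0 i : 0 <= l i.
Proof. by case: l_length => l_gt0 _; apply: ltW. Qed.

Lemma K_gap : (2 * m.+2)%:R < K%:R * gap.
Proof.
have gap_gt0 : 0 < gap := genericity_gap_gt0 l_generic.
by rewrite -ltr_pdivrMr // archi_boundP // divr_ge0 // ltW.
Qed.

Lemma sumS_setD1_top S : t \in S -> sumS l S = l t + sumS l (S :\ t).
Proof. exact: big_setD1. Qed.

Lemma a_attained : exists2 S, short_top S & a = pn (S :\ t).
Proof.
have short_t : short_top [set t].
  rewrite /short_top set11 /sumS big_set1.
  case: l_length => _ [_ /(_ t)]; rewrite is_top_ord_max eqxx => /(_ isT).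
  by congr (_ < _); apply: eq_bigl => j; rewrite !inE.
have : (0 < #|short_top|)%N by apply/card_gt0P; exists [set t].
by case/(eq_bigmax_cond (fun S => pn (S :\ t))) => S; exists S.
Qed.

Lemma pn_le_a S : short_top S -> (pn (S :\ t) <= a)%N.
Proof. exact: leq_bigmax_cond. Qed.

Lemma short_iff_pn_le_a S : t \in S -> short l S <-> (pn (S :\ t) <= a)%N.
Proof.
move=> tS; split => [sh|le_a]; first by apply: pn_le_a; rewrite /short_top tS.
have [S' /andP [tS' shS'] a_def] := a_attained.
apply: contraT => /negP not_short.
suff : (a < pn (S :\ t))%N by rewrite ltnNge le_a.
rewrite a_def.
have := short_not_short_gap l_generic shS' not_short.
rewrite (sumS_setD1_top tS) (sumS_setD1_top tS') => gap_le.
have K_gap1 : (1 * m.+2)%:R < K%:R * gap.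
  by apply: le_lt_trans K_gap; rewrite ler_nat leq_mul2r leqnSn orbT.
rewrite -[X in (X < _)%N]mul1n; apply: (rescale_mul_lt l_ge0 K_gap1).
by rewrite mul1r /gap; lra.
Qed.

Lemma p_mono i j : (i <= j)%N -> (p i <= p j)%N.
Proof. by case: l_length => _ [l_mono _] /l_mono; apply: rescale_mono. Qed.

Let c i := minn (p i) a.+1.

Lemma short_iff_c_le_a S : t \in S -> short l S <-> (\sum_(i in S :\ t) c i <= a)%N.
Proof. by rewrite sum_minn_leq; apply: short_iff_pn_le_a. Qed.

(* Either some index below s has p_j > a + 1, and j together with a maximal
   short set already gives 2a + 1, or c = p there and the gap survives
   rounding. *)
Lemma low_c_gt : (2 * a < \sum_(i in low) c i)%N.
Proof.
have [S' /andP [tS' shS'] a_def] := a_attained.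
have p_le_a i : i \in S' :\ t -> (p i <= a)%N.
  by move=> iS'; rewrite a_def /pn (big_setD1 i iS') leq_addr.
have sum_c_S' : (\sum_(i in S' :\ t) c i = a)%N.
  by rewrite a_def; apply: eq_bigr => i /p_le_a le_a; apply/minn_idPl; apply: leqW.
case: (boolP [exists j in low, (a.+1 < p j)%N]) =>
    [/exists_inP [j j_low lt_pj] | /exists_inPn small].
  have S'_sub : S' :\ t \subset low :\ j.
    apply/subsetP => i iS'; have := p_le_a i iS'; move: iS' j_low.
    rewrite !in_setD1 !mem_low => /andP [-> _] /andP [/leq_s/p_mono le_js _] le_a /=.
    by apply/andP; split; apply/eqP => eq_i; move: le_a; rewrite eq_i; lia.
  have c_j : c j = a.+1 by apply/minn_idPr; apply: ltnW.
  have : (\sum_(i in S' :\ t) c i <= \sum_(i in low :\ j) c i)%N.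
    by rewrite [leqRHS](big_setID (S' :\ t)) /= (setIidPr S'_sub) leq_addr.
  by rewrite (big_setD1 j j_low) /= c_j sum_c_S'; lia.
have -> : (\sum_(i in low) c i = pn low)%N.
  by apply: eq_bigr => i /small; rewrite -leqNgt => le_pi; apply/minn_idPl.
rewrite a_def; apply: (rescale_mul_lt l_ge0 K_gap).
have := short_gap shS'; rewrite (big_two_largest +%R) /= (sumS_setD1_top tS').
case: l_length => _ [l_mono _]; have := l_mono s t (leq_ord s).
by rewrite /sumS /gap; lra.
Qed.

Lemma exists_integer_equivalent : exists l0 : 'I_m.+2 -> R,
  [/\ is_length_vector l0, generic l0, integer_entries l0, top_ineq l0 & equivalent l l0].
Proof.
have c_gt0 i : (0 < c i)%N by rewrite leq_min.
have c_mono i j : (i <= j)%N -> (c i <= c j)%N by move=> /p_mono; rewrite /c; lia.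
have c_s_le : (c s <= a.+1)%N by apply: geq_minr.
have c_low_gt := low_c_gt.
exists (threshold_vec a c); split.
- by apply: threshold_vec_length.
- by apply: threshold_vec_generic.
- by exists (threshold_nat a c).
- by apply: threshold_vec_top_ineq.
apply: equivalent_of_short => S /contains_topE tS.
by rewrite short_iff_c_le_a // short_threshold_vec.
Qed.

End IntegerRepresentative.
End TwoLargest.

Section Transport.
Variables (R : realType) (n1 n2 : nat) (l1 : 'I_n1 -> R) (l2 : 'I_n2 -> R).
Variables (e : 'I_n1 -> 'I_n2) (g : 'I_n2 -> 'I_n1).
Implicit Types (S : {set 'I_n1}) (T : {set 'I_n2}).
Hypothesis e_mono : {mono e : i j / (i <= j)%N}.
Hypothesis eK : cancel e g.
Hypothesis e_top : forall i, is_top (e i) = is_top i.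
Hypothesis e_val : forall i, ~~ is_top i -> val (e i) = val i.
Hypothesis short_e : forall S, contains_top S -> (short l1 S <-> short l2 (e @: S)).
Hypothesis short_in_image :
  forall T, contains_top T -> short l2 T -> {in T, cancel g e}.

Let e_inj : injective e := can_inj eK.

Lemma contains_top_imset S : contains_top (e @: S) <-> contains_top S.
Proof.
split => [[_ /imsetP [i iS ->]]|[i iS top_i]]; first by rewrite e_top; exists i.
by exists (e i); rewrite ?imset_f ?e_top.
Qed.

Lemma imset_preimset T : {in T, cancel g e} -> T = e @: (g @: T).
Proof.
move=> gK; apply/setP => x; apply/idP/imsetP => [xT|[_ /imsetP [y yT ->] ->]].
  by exists (g x); rewrite ?imset_f ?gK.
by rewrite gK.
Qed.

Lemma subset_le_imset S S' : subset_le (e @: S) (e @: S') <-> subset_le S S'.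
Proof.
split => [[f [f_inj f_le]]|[f [f_inj f_le]]].
- have f_img u : u \in S -> exists2 w, w \in S' & f (e u) = e w.
    by move=> uS; have [_ /imsetP [w wS' ->]] := f_le _ (imset_f e uS); exists w.
  exists (g \o f \o e); split => [u v uS vS|u uS] /=.
    have [w _ fu] := f_img u uS; have [w' _ fv] := f_img v vS.
    rewrite fu fv !eK => eq_w; apply: e_inj; apply: f_inj; rewrite ?imset_f //.
    by rewrite fu fv eq_w.
  have [w wS' fu] := f_img u uS; rewrite fu eK; split => //.
  by rewrite -e_mono -fu; case: (f_le _ (imset_f e uS)).
- exists (e \o f \o g); split => /=.
    move=> _ _ /imsetP [u uS ->] /imsetP [v vS ->].
    by rewrite !eK => /e_inj /f_inj ->.
  move=> _ /imsetP [u uS ->].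
  by rewrite eK e_mono; have [? ?] := f_le u uS; rewrite imset_f.
Qed.

Lemma gene_imset S : gene l1 S <-> gene l2 (e @: S).
Proof.
split => [[shS topS maxS]|[shS /contains_top_imset topS maxS]].
  split => [||T shT topT]; [exact/short_e | by rewrite contains_top_imset |].
  have defT := imset_preimset (short_in_image topT shT).
  rewrite defT contains_top_imset in topT *; rewrite defT -short_e // in shT.
  by rewrite subset_le_imset => /(maxS _ shT topT) ->.
split => [||T shT topT leST]; [exact/short_e | by [] |].
apply: (imset_inj e_inj); apply: maxS; rewrite ?contains_top_imset //.
  exact/short_e.
by rewrite subset_le_imset.
Qed.

Lemma gee_transport (A : pred nat) : gee l1 A <-> gee l2 A.
Proof.
have gee_imset (G : {set 'I_n1}) k : [exists i in e @: G, (val i == k) && ~~ is_top i] =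
    [exists i in G, (val i == k) && ~~ is_top i].
  apply/existsP/existsP => [[_ /andP [/imsetP [i iG ->]]]|[i /andP [iG]]];
    rewrite ?e_top => /andP [ik top_i].
    by exists i; rewrite iG -e_val ?ik.
  by exists (e i); rewrite e_top e_val // ik top_i imset_f.
split => [[G /gene_imset geneG defA]|[G geneG defA]].
  by exists (e @: G) => // k; rewrite gee_imset.
have [shG topG _] := geneG.
have defG := imset_preimset (short_in_image topG shG).
rewrite defG -gene_imset in geneG defA.
by exists (g @: G) => // k; rewrite defA gee_imset.
Qed.

End Transport.

Section Extension.
Variables (R : realType) (m : nat) (l : 'I_m.+2 -> R).

Let ins : 'I_m.+3 := inord m.+1.
Let d : R := (\sum_i l i + 1) / 2 - l ord_max.

Lemma val_ins : val ins = m.+1. Proof. exact: inordK. Qed.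

Lemma ext_vec_ins : ext_vec l ins = d.
Proof.
rewrite /ext_vec val_ins ltn_eqF //= eqxx.
by case: insubP => [j _ vj|]; rewrite ?ltnSn // (_ : j = ord_max) //; apply: val_inj.
Qed.

Lemma ext_vec_lift i : ext_vec l (lift ins i) = l i + (i == ord_max)%:R * d.
Proof.
rewrite /ext_vec /= val_ins /bump.
have [->|ne] := eqVneq i ord_max.
  by rewrite /= ltnSn eqxx mul1r /d [RHS]addrC subrK.
have i_le : (i <= m)%N by rewrite -ltnS ltn_neqAle ne -ltnS ltn_ord.
rewrite mul0r addr0 ltnNge i_le add0n !ltn_eqF ?ltnS ?(leq_trans i_le) //.
by case: insubP => [j _ vj|]; [congr l; apply: val_inj | rewrite ltn_ord].
Qed.

Lemma sum_ext_vec_lift (P : pred 'I_m.+2) : P ord_max ->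
  \sum_(i | P i) ext_vec l (lift ins i) = \sum_(i | P i) l i + d.
Proof.
move=> Pt; rewrite (bigD1 ord_max Pt) [in RHS](bigD1 ord_max Pt) ext_vec_lift eqxx mul1r.
rewrite addrAC; congr (_ + _).
by apply: eq_bigr => i /andP [_ /negbTE ne]; rewrite ext_vec_lift ne mul0r addr0.
Qed.

Lemma sum_ext_vec : \sum_x ext_vec l x = \sum_i l i + d *+ 2.
Proof.
rewrite (bigD1_ord ins) //= ext_vec_ins sum_ext_vec_lift //.
by rewrite mulr2n addrCA addrA.
Qed.

Lemma lift_ins_max : lift ins ord_max = ord_max.
Proof. by apply: val_inj; rewrite /= val_ins /bump leqnn. Qed.

Lemma lift_ins_top i : is_top (lift ins i) = is_top i.
Proof.
by rewrite !is_top_ord_max -lift_ins_max; apply/eqP/eqP => [/lift_inj|->].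
Qed.

Lemma lift_ins_val i : ~~ is_top i -> val (lift ins i) = val i.
Proof.
rewrite is_top_ord_max /= val_ins /bump => ne.
by rewrite leqNgt ltn_neqAle ne -ltnS ltn_ord.
Qed.

Lemma short_lift_ins S :
  contains_top S -> (short l S <-> short (ext_vec l) (lift ins @: S)).
Proof.
move=> /contains_topE tS; rewrite !shortE sum_ext_vec /sumS big_imset /=; last first.
  by move=> i j _ _; apply: lift_inj.
by rewrite sum_ext_vec_lift //; split => ?; lra.
Qed.

Hypothesis l_length : is_length_vector l.

Lemma ext_vec_ins_gt0 : 0 < d.
Proof.
case: l_length => _ [_ l_top]; have := l_top ord_max.
rewrite is_top_ord_max eqxx => /(_ isT) top_lt.
by rewrite /d (bigD1 ord_max) //=; lra.
Qed.

Lemma ext_vec_ge0 x : 0 <= ext_vec l x.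
Proof.
have [d_gt0 [l_gt0 _]] := (ext_vec_ins_gt0, l_length).
case: (unliftP ins x) => [j ->|->]; rewrite ?ext_vec_lift ?ext_vec_ins ?(ltW d_gt0) //.
by apply: addr_ge0; [exact: ltW | apply: mulr_ge0; last exact: ltW].
Qed.

Lemma short_ext_vec_image T : contains_top T -> short (ext_vec l) T ->
  {in T, cancel (fun x => odflt ord_max (unlift ins x)) (lift ins)}.
Proof.
move=> /contains_topE topT shT x xT.
suff /unlift_some [j -> ->] : ins != x by [].
apply: contraPneq shT => x_ins; rewrite -x_ins in xT.
rewrite shortE sum_ext_vec; apply/negP; rewrite -leNgt.
have ins_top : ins != ord_max by rewrite -val_eqE /= val_ins ltn_eqF.
rewrite /sumS (big_setD1 ord_max) // (big_setD1 ins) ?inE ?ins_top //=.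
rewrite -[X in ext_vec l X]lift_ins_max ext_vec_lift ext_vec_ins eqxx mul1r.
have : 0 <= \sum_(i in T :\ ord_max :\ ins) ext_vec l i.
  by apply: sumr_ge0 => i _; apply: ext_vec_ge0.
by rewrite /d mulr2n; lra.
Qed.

Lemma gee_ext_vec (A : pred nat) : gee l A <-> gee (ext_vec l) A.
Proof.
have lift_insK : cancel (lift ins) (fun x => odflt ord_max (unlift ins x)).
  by move=> i; rewrite liftK.
apply: (gee_transport _ lift_insK).
- by move=> i j; apply: leq_bump2.
- exact: lift_ins_top.
- exact: lift_ins_val.
- exact: short_lift_ins.
- exact: short_ext_vec_image.
Qed.

End Extension.

Theorem proposition3p1 (R : realType) (n : nat) :
  (forall l : 'I_n -> R, is_length_vector l -> generic l ->
     exists l0 : 'I_n -> R,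
       [/\ is_length_vector l0, generic l0, integer_entries l0,
           top_ineq l0 & equivalent l l0]) /\
  (forall l : 'I_n -> R,
     is_length_vector l -> generic l -> integer_entries l -> top_ineq l ->
     forall A : pred nat, gee l A <-> gee (ext_vec l) A).
Proof.
case: n => [|[|m]]; last first.
  split => [l l_length l_generic | l l_length _ _ _ A].
  - exact: exists_integer_equivalent.
  - exact: gee_ext_vec.
all: by split => l l_length l_generic; move: (length_vector_size l_length l_generic).
Qed.
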